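(* Let $(H,R)$ be a semiquasitriangular Hopf algebra. For each $h\in H$, $(\mathrm{id}_H\otimes\Delta)(\nu(h))\in H\otimes\operatorname{Z}(H)\otimes H$.
   Context: All vector spaces are over a field $k$, $\otimes=\otimes_k$. For a Hopf algebra $H$ with comultiplication $\Delta$, counit $\epsilon$, antipode $S$, we use Sweedler notation $\Delta(h)=h_1\otimes h_2$, etc. $\operatorname{Z}(H)$ is the centre of $H$. For $R\in H\otimes H$ we write $R=R^{(1)}\otimes R^{(2)}$ (summation understood); $R'^{(1)}\otimes R'^{(2)}$ denotes another copy of $R$. Definition (semiquasitriangular Hopf algebra): a pair $(H,R)$ with $H$ a Hopf algebra with bijective antipode and $R\in H\otimes H$ invertible such that (1) $R^{(1)}_1\otimes R^{(1)}_2\otimes R^{(2)} = R^{(1)}\otimes R'^{(1)}\otimes R^{(2)}R'^{(2)}$; (2) $R^{(1)}\otimes R^{(2)}_1\otimes R^{(2)}_2 = R^{(1)}R'^{(1)}\otimes R'^{(2)}\otimes R^{(2)}$; (3) $R^{(1)}\otimes R^{(2)}_2R'^{(1)}\otimes R^{(2)}_1R'^{(2)} = R^{(1)}\otimes R'^{(1)}R^{(2)}_1\otimes R'^{(2)}R^{(2)}_2$; (4) $R^{(1)}_2R'^{(1)}\otimes R^{(1)}_1R'^{(2)}\otimes R^{(2)} = R'^{(1)}R^{(1)}_1\otimes R'^{(2)}R^{(1)}_2\otimes R^{(2)}$; (5) $\nu(h):=R^{(2)}h_2R'^{(2)}\otimes S(h_1)S(R^{(1)})h_3R'^{(1)}\in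 H\otimes\operatorname{Z}(H)$ for all $h\in H$; (6) $\nu(h)=R^{(1)}h_2R'^{(1)}\otimes S(R'^{(2)})S(h_1)R^{(2)}h_3$ for all $h\in H$. The map $\nu$ in the claim is the one defined in (5). *)

From HB Require Import structures.
From mathcomp Require Import all_boot all_order all_algebra.
Set Implicit Arguments. Unset Strict Implicit. Unset Printing Implicit Defensive.
Import GRing.Theory.
Local Open Scope ring_scope.

Section Tensor.
Variable k : fieldType.

Section T2.
Variables U V : lmodType k.

Inductive tstep2 : seq (U * V) -> seq (U * V) -> Prop :=
| ts2_addl a a' b : tstep2 [:: (a + a', b)] [:: (a, b); (a', b)]
| ts2_addr a b b' : tstep2 [:: (a, b + b')] [:: (a, b); (a, b')]
| ts2_scal (c : k) a b : tstep2 [:: (c *: a, b)] [:: (a, c *: b)]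
| ts2_zero b : tstep2 [:: (0, b)] [::].

(* the congruence they generate: equality in U (x) V *)
Inductive teq2 : seq (U * V) -> seq (U * V) -> Prop :=
| te2_step s1 x y s2 : tstep2 x y -> teq2 (s1 ++ x ++ s2) (s1 ++ y ++ s2)
| te2_perm x y : perm_eq x y -> teq2 x y
| te2_sym x y : teq2 x y -> teq2 y x
| te2_trans x y z : teq2 x y -> teq2 y z -> teq2 x z.

Definition in_tensor2_l (A : U -> Prop) (t : seq (U * V)) : Prop :=
  exists t' : seq (U * V), (forall p, p \in t' -> A p.1) /\ teq2 t t'.
Definition in_tensor2_r (B : V -> Prop) (t : seq (U * V)) : Prop :=
  exists t' : seq (U * V), (forall p, p \in t' -> B p.2) /\ teq2 t t'.
End T2.

Section T3.
Variables U V W : lmodType k.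

Inductive tstep3 : seq (U * V * W) -> seq (U * V * W) -> Prop :=
| ts3_add1 a a' b c : tstep3 [:: (a + a', b, c)] [:: (a, b, c); (a', b, c)]
| ts3_add2 a b b' c : tstep3 [:: (a, b + b', c)] [:: (a, b, c); (a, b', c)]
| ts3_add3 a b c c' : tstep3 [:: (a, b, c + c')] [:: (a, b, c); (a, b, c')]
| ts3_scal2 (x : k) a b c : tstep3 [:: (x *: a, b, c)] [:: (a, x *: b, c)]
| ts3_scal3 (x : k) a b c : tstep3 [:: (x *: a, b, c)] [:: (a, b, x *: c)]
| ts3_zero b c : tstep3 [:: (0, b, c)] [::].

Inductive teq3 : seq (U * V * W) -> seq (U * V * W) -> Prop :=
| te3_step s1 x y s2 : tstep3 x y -> teq3 (s1 ++ x ++ s2) (s1 ++ y ++ s2)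
| te3_perm x y : perm_eq x y -> teq3 x y
| te3_sym x y : teq3 x y -> teq3 y x
| te3_trans x y z : teq3 x y -> teq3 y z -> teq3 x z.

Definition in_tensor3_mid (B : V -> Prop) (t : seq (U * V * W)) : Prop :=
  exists t' : seq (U * V * W), (forall p, p \in t' -> B p.1.2) /\ teq3 t t'.
End T3.

Section Hopf.
Variable H : algType k.

Definition central (z : H) : Prop := forall y : H, z * y = y * z.

Definition tmul2 (x y : seq (H * H)) : seq (H * H) :=
  [seq (p.1 * q.1, p.2 * q.2) | p <- x, q <- y].

(* (Delta (x) id), (id (x) Delta) : H (x) H -> H (x) H (x) H *)
Definition Dl (D : H -> seq (H * H)) (t : seq (H * H)) : seq (H * H * H) :=
  flatten [seq [seq (q.1, q.2, p.2) | q <- D p.1] | p <- t].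
Definition Dr (D : H -> seq (H * H)) (t : seq (H * H)) : seq (H * H * H) :=
  flatten [seq [seq (p.1, q.1, q.2) | q <- D p.2] | p <- t].

(* h_1 (x) h_2 (x) h_3 := (Delta (x) id) Delta h *)
Definition D3 (D : H -> seq (H * H)) (h : H) : seq (H * H * H) := Dl D (D h).

Record is_hopf (D : H -> seq (H * H)) (eps : H -> k) (S : H -> H) : Prop := {
  D_add : forall a b, teq2 (D (a + b)) (D a ++ D b);
  D_scale : forall (c : k) a, teq2 (D (c *: a)) [seq (c *: p.1, p.2) | p <- D a];
  D_coass : forall h, teq3 (Dl D (D h)) (Dr D (D h));
  D_mul : forall a b, teq2 (D (a * b)) (tmul2 (D a) (D b));
  D_one : teq2 (D 1) [:: (1, 1)];
  eps_add : forall a b, eps (a + b) = eps a + eps b;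
  eps_scale : forall (c : k) a, eps (c *: a) = c * eps a;
  eps_mul : forall a b, eps (a * b) = eps a * eps b;
  eps_one : eps 1 = 1;
  counit_l : forall h, \sum_(p <- D h) eps p.1 *: p.2 = h;
  counit_r : forall h, \sum_(p <- D h) eps p.2 *: p.1 = h;
  S_add : forall a b, S (a + b) = S a + S b;
  S_scale : forall (c : k) a, S (c *: a) = c *: S a;
  antipode_l : forall h, \sum_(p <- D h) S p.1 * p.2 = eps h *: 1;
  antipode_r : forall h, \sum_(p <- D h) p.1 * S p.2 = eps h *: 1
}.

(* nu(h) = R^(2) h_2 R'^(2) (x) S(h_1) S(R^(1)) h_3 R'^(1) *)
Definition nu (S : H -> H) (D : H -> seq (H * H)) (R : seq (H * H)) (h : H)
  : seq (H * H) :=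
  flatten [seq [seq (r.2 * x.1.2 * r'.2, S x.1.1 * S r.1 * x.2 * r'.1)
                  | x <- D3 D h, r' <- R] | r <- R].

Definition nu6 (S : H -> H) (D : H -> seq (H * H)) (R : seq (H * H)) (h : H)
  : seq (H * H) :=
  flatten [seq [seq (r.1 * x.1.2 * r'.1, S r'.2 * S x.1.1 * r.2 * x.2)
                  | x <- D3 D h, r' <- R] | r <- R].

Record is_semiqt (D : H -> seq (H * H)) (eps : H -> k) (S : H -> H)
    (R : seq (H * H)) : Prop := {
  sqt_hopf : is_hopf D eps S;
  sqt_Sbij : bijective S;
  sqt_inv : exists Ri : seq (H * H),
      teq2 (tmul2 R Ri) [:: (1, 1)] /\ teq2 (tmul2 Ri R) [:: (1, 1)];
  sqt1 : teq3 (Dl D R) [seq (r.1, r'.1, r.2 * r'.2) | r <- R, r' <- R];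
  sqt2 : teq3 (Dr D R) [seq (r.1 * r'.1, r'.2, r.2) | r <- R, r' <- R];
  sqt3 : teq3
    (flatten [seq [seq (r.1, d.2 * r'.1, d.1 * r'.2) | d <- D r.2, r' <- R] | r <- R])
    (flatten [seq [seq (r.1, r'.1 * d.1, r'.2 * d.2) | d <- D r.2, r' <- R] | r <- R]);
  sqt4 : teq3
    (flatten [seq [seq (d.2 * r'.1, d.1 * r'.2, r.2) | d <- D r.1, r' <- R] | r <- R])
    (flatten [seq [seq (r'.1 * d.1, r'.2 * d.2, r.2) | d <- D r.1, r' <- R] | r <- R]);
  sqt5 : forall h, in_tensor2_r central (nu S D R h);
  sqt6 : forall h, teq2 (nu S D R h) (nu6 S D R h)
}.
End Hopf.
End Tensor.

(* Expanding the coproduct of the second leg of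
     nu(h) = R^(2) h_2 R'^(2) (x) S(h_1) S(R^(1)) h_3 R'^(1)
   with the multiplicativity of Delta and Delta o S = (S (x) S) o flip o Delta,
   absorbing the coproducts of R^(1) and R'^(1) by condition (1), and
   reassociating the resulting five-fold coproduct of h gives
     (id (x) Delta) nu(h)
       = R^(2) nu(h_2)^(1) R'^(2) (x) nu(h_2)^(2) (x) S(h_1) S(R^(1)) h_3 R'^(1),
   whose middle leg is central by condition (5) applied to h_2.
   Identities between formal sums of tensors are proved in the quotient of
   formal triple sums by the tensor relations: a k-module on which multilinear
   maps are well defined. *)

From HB Require Import structures.
From mathcomp Require Import all_boot all_order all_algebra generic_quotient.
From mathcomp Require Import boolp.
Set Implicit Arguments. Unset Strict Implicit. Unset Printing Implicit Defensive.
Import GRing.Theory.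
Local Open Scope ring_scope.
Local Open Scope quotient_scope.

Section MultilinearSums.
Variables (k : fieldType) (U V W X : lmodType k).

Definition linear2 (G : U * V -> X) :=
  (forall b, linear (fun a => G (a, b))) /\ (forall a, linear (fun b => G (a, b))).

Definition linear3 (G : U * V * W -> X) :=
  [/\ forall b c, linear (fun a => G (a, b, c)),
      forall a c, linear (fun b => G (a, b, c))
    & forall a b, linear (fun c => G (a, b, c))].

Section LinearFun.
Variables (Y : lmodType k) (f : Y -> X).
Hypothesis fL : linear f.

Lemma linear_fun0 : f 0 = 0.
Proof.
have [_ fD] := GRing.semilinear_linear fL.
by apply: (addIr (f 0)); rewrite -fD !add0r.
Qed.

Lemma linear_funD a b : f (a + b) = f a + f b.
Proof. by have [_ ->] := GRing.semilinear_linear fL. Qed.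

Lemma linear_funZ c a : f (c *: a) = c *: f a.
Proof. by have [-> _] := GRing.semilinear_linear fL. Qed.

Lemma linear_fun_sum I (s : seq I) (F : I -> Y) :
  f (\sum_(i <- s) F i) = \sum_(i <- s) f (F i).
Proof. by elim: s => [|i s IH]; rewrite ?big_nil ?linear_fun0 // !big_cons linear_funD IH. Qed.
End LinearFun.

Lemma teq2_sum (G : U * V -> X) x y :
  linear2 G -> teq2 x y -> \sum_(p <- x) G p = \sum_(p <- y) G p.
Proof.
move=> [GlL GrL]; elim=> [s1 x1 y1 s2 st|? ? ?|//|? ? ? _ -> _ //]; last exact: perm_big.
rewrite !big_cat /=; congr (_ + (_ + _)).
case: st => *; rewrite !big_cons ?big_nil ?addr0.
- by rewrite (linear_funD (GlL _)).
- by rewrite (linear_funD (GrL _)).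
- by rewrite (linear_funZ (GlL _)) (linear_funZ (GrL _)).
- by rewrite (linear_fun0 (GlL _)).
Qed.

Lemma teq3_sum (G : U * V * W -> X) x y :
  linear3 G -> teq3 x y -> \sum_(p <- x) G p = \sum_(p <- y) G p.
Proof.
move=> [G1L G2L G3L]; elim=> [s1 x1 y1 s2 st|? ? ?|//|? ? ? _ -> _ //]; last exact: perm_big.
rewrite !big_cat /=; congr (_ + (_ + _)).
case: st => *; rewrite !big_cons ?big_nil ?addr0.
- by rewrite (linear_funD (G1L _ _)).
- by rewrite (linear_funD (G2L _ _)).
- by rewrite (linear_funD (G3L _ _)).
- by rewrite (linear_funZ (G1L _ _)) (linear_funZ (G2L _ _)).
- by rewrite (linear_funZ (G1L _ _)) (linear_funZ (G3L _ _)).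
- by rewrite (linear_fun0 (G1L _ _)).
Qed.

End MultilinearSums.

Section LinearClosure.
Variable k : fieldType.
Implicit Types U V W X Y Z : lmodType k.

Lemma linear_comp_fun Y Z X (F : Y -> X) (f : Z -> Y) :
  linear F -> linear f -> linear (fun a => F (f a)).
Proof. by move=> FL fL r a b; rewrite fL FL. Qed.

Lemma linear_sum_fun Y X I (s : seq I) (F : I -> Y -> X) :
  (forall i, linear (F i)) -> linear (fun a => \sum_(i <- s) F i a).
Proof.
move=> FL r a b; rewrite scaler_sumr -big_split; apply: eq_bigr => i _.
exact: FL.
Qed.

Lemma linear2_l U V X Y (G : U * V -> X) (f : Y -> U) b :
  linear2 G -> linear f -> linear (fun a => G (f a, b)).
Proof. by move=> GL; apply: linear_comp_fun (GL.1 b). Qed.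

Lemma linear2_r U V X Y (G : U * V -> X) (f : Y -> V) a :
  linear2 G -> linear f -> linear (fun b => G (a, f b)).
Proof. by move=> GL; apply: linear_comp_fun (GL.2 a). Qed.

Variable H : algType k.

Lemma linear_mulr_fun Y (f : Y -> H) y : linear f -> linear (fun a => f a * y).
Proof. by move=> fL r a b; rewrite fL mulrDl scalerAl. Qed.

Lemma linear_mull_fun Y (f : Y -> H) y : linear f -> linear (fun a => y * f a).
Proof. by move=> fL r a b; rewrite fL mulrDr scalerAr. Qed.

End LinearClosure.

Section TripleTensor.
Variables (k : fieldType) (U V W : lmodType k).
Implicit Types x y : seq (U * V * W).

Lemma teq3_refl x : teq3 x x.
Proof. exact/te3_perm/perm_refl. Qed.

Lemma teq3_of_step x y : tstep3 x y -> teq3 x y.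
Proof. by move=> /(te3_step [::] [::]); rewrite /= !cats0. Qed.

Lemma teq3_cat x x' y y' : teq3 x x' -> teq3 y y' -> teq3 (x ++ y) (x' ++ y').
Proof.
have catl (z z' t : seq (U * V * W)) : teq3 z z' -> teq3 (z ++ t) (z' ++ t).
  elim=> [s1 ? ? s2 ?|? ? ?|? ? _ ?|? ? ? _ zz1 _ zz2].
  - by rewrite -!catA; apply: te3_step.
  - by apply: te3_perm; rewrite perm_cat2r.
  - exact: te3_sym.
  - exact: te3_trans zz1 zz2.
have swap (z t : seq (U * V * W)) : teq3 (z ++ t) (t ++ z) by apply/te3_perm; rewrite perm_catC.
move=> /(catl _ _ y) xx' /(catl _ _ x') yy'.
exact: te3_trans xx' (te3_trans (swap _ _) (te3_trans yy' (swap _ _))).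
Qed.

Definition scale1 (c : k) (p : U * V * W) := (c *: p.1.1, p.1.2, p.2).

Lemma teq3_scale1 c x y : teq3 x y -> teq3 (map (scale1 c) x) (map (scale1 c) y).
Proof.
elim=> [s1 ? ? s2 st|? ? ?|? ? _ ?|? ? ? _ xx1 _ xx2].
- rewrite !map_cat; apply/teq3_cat/teq3_cat; try exact: teq3_refl.
  apply: teq3_of_step; case: st => [a a' b d|a b b' d|a b d d'|x0 a b d|x0 a b d|b d] /=;
    rewrite /scale1 /= ?scalerDr ?scaler0 ?(scalerA c x0) ?(mulrC c x0) -?scalerA;
    constructor.
- exact/te3_perm/perm_map.
- exact: te3_sym.
- exact: te3_trans xx1 xx2.
Qed.

Definition teq3b x y := `[< teq3 x y >].

Lemma teq3b_refl : reflexive teq3b.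
Proof. by move=> x; apply/asboolP/teq3_refl. Qed.

Lemma teq3b_sym : symmetric teq3b.
Proof. by move=> x y; apply/asboolP/asboolP => /te3_sym. Qed.

Lemma teq3b_trans : transitive teq3b.
Proof. by move=> y x z /asboolP xy /asboolP yz; apply/asboolP/(te3_trans xy). Qed.

Canonical teq3_equiv := EquivRel teq3b teq3b_refl teq3b_sym teq3b_trans.

Definition tensor3 := {eq_quot teq3b}.
HB.instance Definition _ : EqQuotient _ teq3b tensor3 := EqQuotient.on tensor3.
HB.instance Definition _ := Choice.on tensor3.

Notation pi3 := (\pi_tensor3).

Lemma pi3_eq x y : pi3 x = pi3 y <-> teq3 x y.
Proof.
rewrite (rwP eqP) (eqquotE tensor3); split; [exact: asboolW | exact: asboolT].
Qed.

Lemma teq3_repr x : teq3 (repr (pi3 x)) x.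
Proof. by apply/pi3_eq; rewrite reprK. Qed.

Definition add3 := locked (fun q q' : tensor3 => pi3 (repr q ++ repr q')).

Lemma add3_pi x y : add3 (pi3 x) (pi3 y) = pi3 (x ++ y).
Proof. by rewrite /add3 -lock; apply/pi3_eq/teq3_cat; apply: teq3_repr. Qed.

Lemma add3A : associative add3.
Proof. by elim/quotW=> x; elim/quotW=> y; elim/quotW=> z; rewrite !add3_pi catA. Qed.

Lemma add3C : commutative add3.
Proof.
by elim/quotW=> x; elim/quotW=> y; rewrite !add3_pi; apply/pi3_eq/te3_perm; rewrite perm_catC.
Qed.

Lemma add30 : left_id (pi3 [::]) add3.
Proof. by elim/quotW=> x; rewrite add3_pi. Qed.

HB.instance Definition _ := GRing.isNmodule.Build tensor3 add3A add3C add30.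

Lemma pi3_cat x y : pi3 (x ++ y) = pi3 x + pi3 y.
Proof. by rewrite -add3_pi. Qed.

Definition pure3 a b c : tensor3 := pi3 [:: (a, b, c)].

Lemma pi3_sum x : pi3 x = \sum_(p <- x) pure3 p.1.1 p.1.2 p.2.
Proof.
elim: x => [|[[a b] c] x IH]; first by rewrite big_nil.
by rewrite big_cons -IH -cat1s pi3_cat.
Qed.

Lemma pure3D1 a a' b c : pure3 (a + a') b c = pure3 a b c + pure3 a' b c.
Proof. by rewrite /pure3 -[RHS]pi3_cat; apply/pi3_eq/teq3_of_step/ts3_add1. Qed.

Lemma pure30 b c : pure3 0 b c = 0.
Proof. by apply/pi3_eq/teq3_of_step/ts3_zero. Qed.

Definition scale3 := locked (fun (c : k) (q : tensor3) => pi3 (map (scale1 c) (repr q))).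

Lemma scale3_pi c x : scale3 c (pi3 x) = pi3 (map (scale1 c) x).
Proof. by rewrite /scale3 -lock; apply/pi3_eq/teq3_scale1/teq3_repr. Qed.

Lemma scale3A c d q : scale3 c (scale3 d q) = scale3 (c * d) q.
Proof.
elim/quotW: q => x; rewrite !scale3_pi -map_comp; congr pi3.
by apply: eq_map => p; rewrite /scale1 /= scalerA.
Qed.

Lemma scale31 : left_id 1 scale3.
Proof.
elim/quotW=> x; rewrite scale3_pi; congr pi3.
by rewrite -[RHS]map_id; apply: eq_map => -[[a b] c]; rewrite /scale1 scale1r.
Qed.

Lemma scale3Dr : right_distributive scale3 +%R.
Proof.
move=> c; elim/quotW=> x; elim/quotW=> y.
by rewrite !scale3_pi -!pi3_cat scale3_pi map_cat.
Qed.

Lemma scale3Dl q : {morph scale3^~ q : c d / c + d}.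
Proof.
move=> c d; elim/quotW: q => x; rewrite !scale3_pi !pi3_sum !big_map -big_split /=.
by apply: eq_bigr => p _; rewrite scalerDl pure3D1.
Qed.

Lemma scale30 q : scale3 0 q = 0.
Proof.
elim/quotW: q => x; rewrite scale3_pi pi3_sum big_map big1 // => p _.
by rewrite /scale1 /= scale0r pure30.
Qed.

Lemma add3N : left_inverse 0 (scale3 (-1)) +%R.
Proof. by move=> q; rewrite -{2}[q]scale31 -scale3Dl addNr scale30. Qed.

HB.instance Definition _ := GRing.Nmodule_isZmodule.Build tensor3 add3N.
HB.instance Definition _ :=
  GRing.Zmodule_isLmodule.Build k tensor3 scale3A scale31 scale3Dr scale3Dl.

Lemma pi3_scale c x : pi3 (map (scale1 c) x) = c *: pi3 x.
Proof. by rewrite -scale3_pi. Qed.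

Lemma pure3_scale1 r a b c : pure3 (r *: a) b c = r *: pure3 a b c.
Proof. by rewrite /pure3 -pi3_scale. Qed.

Lemma pure3_scale2 r a b c : pure3 a (r *: b) c = r *: pure3 a b c.
Proof. by rewrite -pure3_scale1; apply/pi3_eq/te3_sym/teq3_of_step/ts3_scal2. Qed.

Lemma pure3_scale3 r a b c : pure3 a b (r *: c) = r *: pure3 a b c.
Proof. by rewrite -pure3_scale1; apply/pi3_eq/te3_sym/teq3_of_step/ts3_scal3. Qed.

Lemma linear_pure3_1 b c : linear (fun a => pure3 a b c).
Proof. by move=> r a a' /=; rewrite pure3D1 pure3_scale1. Qed.

Lemma linear_pure3_2 a c : linear (fun b => pure3 a b c).
Proof.
move=> r b b' /=; rewrite -pure3_scale2 -pi3_cat.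
by apply/pi3_eq/teq3_of_step/ts3_add2.
Qed.

Lemma linear_pure3_3 a b : linear (fun c => pure3 a b c).
Proof.
move=> r c c' /=; rewrite -pure3_scale3 -pi3_cat.
by apply/pi3_eq/teq3_of_step/ts3_add3.
Qed.

End TripleTensor.

Section MiddleFactor.
Variables (k : fieldType) (U V W : lmodType k) (B : V -> Prop).
Local Notation pi3 := (\pi_(tensor3 U V W)).

Definition in_mid (q : tensor3 U V W) :=
  exists2 t, (forall p, p \in t -> B p.1.2) & q = pi3 t.

Lemma in_tensor3_mid_pi3 x : in_mid (pi3 x) -> in_tensor3_mid B x.
Proof. by case=> t tB /pi3_eq xt; exists t. Qed.

Lemma in_mid_pure3 a b c : B b -> in_mid (pure3 a b c).
Proof. by exists [:: (a, b, c)] => // p; rewrite inE => /eqP->. Qed.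

Lemma in_mid_sum (I : eqType) (s : seq I) (F : I -> tensor3 U V W) :
  (forall i, i \in s -> in_mid (F i)) -> in_mid (\sum_(i <- s) F i).
Proof.
elim: s => [_|i s IH Fs]; first by exists [::]; rewrite ?big_nil.
rewrite big_cons; have [t tB ->] := Fs i (mem_head _ _).
have [t' t'B ->] := IH (fun j js => Fs j (mem_behead (s := i :: s) js)).
exists (t ++ t'); last by rewrite pi3_cat.
by move=> p; rewrite mem_cat => /orP[/tB|/t'B].
Qed.

Lemma in_mid_tensor2_r (A : lmodType k) (f : A -> U) c (t : seq (A * V)) :
  linear f -> in_tensor2_r B t -> in_mid (\sum_(p <- t) pure3 (f p.1) p.2 c).
Proof.
move=> fL [t' [t'B tt']]; rewrite (teq2_sum _ tt'); last first.
  by split=> [b|a] /=; [apply: linear_comp_fun (linear_pure3_1 _ _) fL | apply: linear_pure3_2].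
by apply: in_mid_sum => p /t'B; apply: in_mid_pure3.
Qed.

End MiddleFactor.

Section Hopf.
Variables (k : fieldType) (H : algType k).
Variables (D : H -> seq (H * H)) (eps : H -> k) (S : H -> H).
Hypothesis HH : is_hopf D eps S.

Lemma linear_S : linear S.
Proof. by move=> r a b; rewrite (S_add HH) (S_scale HH). Qed.

Implicit Types X : lmodType k.

Lemma linear_Delta_sum X (G : H * H -> X) : linear2 G -> linear (fun a => \sum_(q <- D a) G q).
Proof.
move=> GL r a b; rewrite (teq2_sum GL (D_add HH _ _)) big_cat.
rewrite (teq2_sum GL (D_scale HH _ _)) big_map scaler_sumr; congr (_ + _).
by apply: eq_bigr => -[p1 p2] _ /=; rewrite (linear_funZ (GL.1 p2)).
Qed.

Ltac linear_tac := repeat first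
  [ match goal with |- linear2 _ => split=> ? /= | |- linear3 _ => split=> ? ? /= end
  | apply: linear_sum_fun => ?
  | apply: linear_mulr_fun
  | apply: linear_mull_fun
  | apply: (linear_comp_fun linear_S)
  | apply: (linear_comp_fun (linear_Delta_sum _))
  | apply: (linear_comp_fun (linear_pure3_1 _ _))
  | apply: (linear_comp_fun (linear_pure3_2 _ _))
  | apply: (linear_comp_fun (linear_pure3_3 _ _))
  | apply: linear2_l; [eassumption|]
  | apply: linear2_r; [eassumption|] ].

Lemma Delta_mul_sum X (G : H * H -> X) a b : linear2 G ->
  \sum_(q <- D (a * b)) G q = \sum_(q <- D a) \sum_(q' <- D b) G (q.1 * q'.1, q.2 * q'.2).
Proof. by move=> GL; rewrite (teq2_sum GL (D_mul HH a b)) /tmul2 big_allpairs_dep. Qed.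

Lemma Delta_one_sum X (G : H * H -> X) : linear2 G -> \sum_(q <- D 1) G q = G (1, 1).
Proof. by move=> GL; rewrite (teq2_sum GL (D_one HH)) big_seq1. Qed.

Lemma coassoc_sum X (G : H * H * H -> X) h : linear3 G ->
  \sum_(p <- D h) \sum_(q <- D p.1) G (q.1, q.2, p.2) =
  \sum_(p <- D h) \sum_(q <- D p.2) G (p.1, q.1, q.2).
Proof.
move=> GL; have := teq3_sum GL (D_coass HH h).
by rewrite /Dl /Dr !big_flatten /= !big_map; under eq_bigr do rewrite big_map;
   under [in RHS]eq_bigr do rewrite big_map.
Qed.

Lemma counit_l_sum X (f : H -> X) h : linear f -> \sum_(p <- D h) eps p.1 *: f p.2 = f h.
Proof.
move=> fL; rewrite -{2}(counit_l HH h) (linear_fun_sum fL).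
by under [RHS]eq_bigr do rewrite (linear_funZ fL).
Qed.

Lemma counit_r_sum X (f : H -> X) h : linear f -> \sum_(p <- D h) eps p.2 *: f p.1 = f h.
Proof.
move=> fL; rewrite -{2}(counit_r HH h) (linear_fun_sum fL).
by under [RHS]eq_bigr do rewrite (linear_funZ fL).
Qed.

Lemma antipode_l_sum X (f : H -> X) h : linear f -> \sum_(p <- D h) f (S p.1 * p.2) = eps h *: f 1.
Proof. by move=> fL; rewrite -(linear_funZ fL) -(antipode_l HH h) (linear_fun_sum fL). Qed.

Lemma antipode_r_sum X (f : H -> X) h : linear f -> \sum_(p <- D h) f (p.1 * S p.2) = eps h *: f 1.
Proof. by move=> fL; rewrite -(linear_funZ fL) -(antipode_r HH h) (linear_fun_sum fL). Qed.

Section DeltaAntipode.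
Variables (X : lmodType k) (G : H * H -> X).
Hypothesis GL : linear2 G.

(* K (a_1, a_2, a_3) is G applied to (S (x) S)(flip (Delta a_1)) * Delta a_2 * Delta (S a_3):
   the antipode axioms collapse it to Delta (S a) when a_1 a_2 is contracted and to
   (S (x) S)(flip (Delta a)) when a_2 a_3 is. *)
Let K (t : H * H * H) := \sum_(s <- D t.1.1) \sum_(u <- D t.1.2) \sum_(w <- D (S t.2))
   G (S s.2 * u.1 * w.1, S s.1 * u.2 * w.2).

Let KL : linear3 K.
Proof. by rewrite /K; linear_tac. Qed.

Let K_assoc_r a :
  \sum_(p <- D a) \sum_(q <- D p.2) K (p.1, q.1, q.2) = \sum_(q <- D a) G (S q.2, S q.1).
Proof.
rewrite /K /=.
rewrite -(counit_r_sum (f := fun y => \sum_(q <- D y) G (S q.2, S q.1))); last by linear_tac.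
apply: eq_bigr => p _; rewrite exchange_big scaler_sumr; apply: eq_bigr => s _.
transitivity (\sum_(q <- D p.2) \sum_(m <- D (q.1 * S q.2)) G (S s.2 * m.1, S s.1 * m.2)).
  apply: eq_bigr => q _; rewrite Delta_mul_sum; last by linear_tac.
  by apply: eq_bigr => u _; apply: eq_bigr => w _; rewrite !mulrA.
rewrite (antipode_r_sum (f := fun y => \sum_(m <- D y) G (S s.2 * m.1, S s.1 * m.2)));
  last by linear_tac.
by rewrite Delta_one_sum ?mulr1 //; linear_tac.
Qed.

Let K_assoc_l a :
  \sum_(p <- D a) \sum_(q <- D p.1) K (q.1, q.2, p.2) = \sum_(q <- D (S a)) G q.
Proof.
rewrite /K /=.
rewrite -(counit_l_sum (f := fun y => \sum_(q <- D (S y)) G q)); last by linear_tac.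
apply: eq_bigr => p _.
rewrite (coassoc_sum (G := fun t => \sum_(u <- D t.2) \sum_(w <- D (S p.2))
     G (S t.1.2 * u.1 * w.1, S t.1.1 * u.2 * w.2))) /=; last by linear_tac.
transitivity (\sum_(q <- D p.1) \sum_(w <- D (S p.2)) G (w.1, S q.1 * q.2 * w.2)).
  apply: eq_bigr => q _.
  rewrite -(coassoc_sum (G := fun t => \sum_(w <- D (S p.2))
     G (S t.1.1 * t.1.2 * w.1, S q.1 * t.2 * w.2))) /=; last by linear_tac.
  transitivity (\sum_(s <- D q.2) eps s.1 *: \sum_(w <- D (S p.2)) G (w.1, S q.1 * s.2 * w.2)).
    apply: eq_bigr => s _; rewrite exchange_big scaler_sumr; apply: eq_bigr => w _.
    rewrite (antipode_l_sum (f := fun m => G (m * w.1, S q.1 * s.2 * w.2))); last by linear_tac.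
    by rewrite mul1r.
  rewrite (counit_l_sum (f := fun m => \sum_(w <- D (S p.2)) G (w.1, S q.1 * m * w.2))) //.
  by linear_tac.
rewrite exchange_big scaler_sumr; apply: eq_bigr => w _.
rewrite (antipode_l_sum (f := fun m => G (w.1, m * w.2))); last by linear_tac.
by rewrite mul1r; case: w.
Qed.

Lemma Delta_antipode_sum a : \sum_(q <- D (S a)) G q = \sum_(q <- D a) G (S q.2, S q.1).
Proof. by rewrite -K_assoc_l coassoc_sum // K_assoc_r. Qed.
End DeltaAntipode.

Definition linear5 X (F : H -> H -> H -> H -> H -> X) :=
  [/\ forall b c d e, linear (fun a => F a b c d e), forall a c d e, linear (fun b => F a b c d e),
      forall a b d e, linear (fun c => F a b c d e), forall a b c e, linear (fun d => F a b c d e)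
    & forall a b c d, linear (fun e => F a b c d e)].

Lemma coassoc5_sum X (F : H -> H -> H -> H -> H -> X) h : linear5 F ->
  \sum_(p <- D h) \sum_(q <- D p.1) \sum_(a <- D q.1) \sum_(c <- D p.2) F a.1 a.2 q.2 c.1 c.2 =
  \sum_(p <- D h) \sum_(q <- D p.1) \sum_(u <- D q.2) \sum_(v <- D u.1) F q.1 v.1 v.2 u.2 p.2.
Proof.
move=> [? ? ? ? ?].
transitivity (\sum_(p <- D h) \sum_(q <- D p.1) \sum_(a <- D q.2) \sum_(c <- D p.2)
  F q.1 a.1 a.2 c.1 c.2).
  apply: eq_bigr => p _.
  rewrite (coassoc_sum (G := fun t => \sum_(c <- D p.2) F t.1.1 t.1.2 t.2 c.1 c.2)) //.
  by linear_tac.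
rewrite (coassoc_sum (G := fun t =>
  \sum_(a <- D t.1.2) \sum_(c <- D t.2) F t.1.1 a.1 a.2 c.1 c.2)) /=;
  last by linear_tac.
rewrite (coassoc_sum (G := fun t =>
  \sum_(u <- D t.1.2) \sum_(v <- D u.1) F t.1.1 v.1 v.2 u.2 t.2)) /=;
  last by linear_tac.
apply: eq_bigr => p _.
transitivity (\sum_(q <- D p.2) \sum_(a <- D q.2) \sum_(c <- D a.1) F p.1 q.1 c.1 c.2 a.2).
  rewrite (coassoc_sum (G := fun t => \sum_(c <- D t.2) F p.1 t.1.1 t.1.2 c.1 c.2)) /=;
    last by linear_tac.
  apply: eq_bigr => q _.
  by rewrite -(coassoc_sum (G := fun t => F p.1 q.1 t.1.1 t.1.2 t.2)) //; linear_tac.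
symmetry.
transitivity (\sum_(q <- D p.2) \sum_(u <- D q.1) \sum_(v <- D u.2) F p.1 u.1 v.1 v.2 q.2).
  apply: eq_bigr => q _.
  by rewrite (coassoc_sum (G := fun t => F p.1 t.1.1 t.1.2 t.2 q.2)) //; linear_tac.
by rewrite (coassoc_sum (G := fun t => \sum_(v <- D t.1.2) F p.1 t.1.1 v.1 v.2 t.2)) //; linear_tac.
Qed.

Variable R : seq (H * H).
Hypothesis R_Delta_l : teq3 (Dl D R) [seq (r.1, r'.1, r.2 * r'.2) | r <- R, r' <- R].
Hypothesis nu_central : forall h, in_tensor2_r (@central k H) (nu S D R h).

Local Notation pi3 := (\pi_(tensor3 H H H)).

Lemma R_Delta_l_sum X (G : H * H * H -> X) : linear3 G ->
  \sum_(r <- R) \sum_(q <- D r.1) G (q.1, q.2, r.2) =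
  \sum_(r <- R) \sum_(r' <- R) G (r.1, r'.1, r.2 * r'.2).
Proof.
move=> GL; have := teq3_sum GL R_Delta_l.
rewrite /Dl big_flatten big_allpairs_dep /= big_map => <-.
by apply: eq_bigr => p _; rewrite big_map.
Qed.

Lemma nu_sum X g (F : H * H -> X) : \sum_(p <- nu S D R g) F p =
  \sum_(s <- R) \sum_(u <- D g) \sum_(v <- D u.1) \sum_(r' <- R)
     F (s.2 * v.2 * r'.2, S v.1 * S s.1 * u.2 * r'.1).
Proof.
rewrite /nu big_flatten big_map; apply: eq_bigr => s _.
rewrite big_allpairs_dep /D3 /Dl big_flatten big_map; apply: eq_bigr => u _.
by rewrite big_map.
Qed.

Lemma pi3_Dr (t : seq (H * H)) :
  pi3 (Dr D t) = \sum_(p <- t) \sum_(q <- D p.2) pure3 p.1 q.1 q.2.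
Proof. by rewrite pi3_sum /Dr big_flatten big_map; apply: eq_bigr => p _; rewrite big_map. Qed.

(* The term of (id (x) Delta) nu(h) indexed by h_(1)(1), h_(1)(2), h_(2), h_(3)(1), h_(3)(2)
   once condition (1) has absorbed the coproducts of R^(1) and R'^(1). *)
Definition Dr_nu_summand (a1 a2 b c1 c2 : H) : tensor3 H H H :=
  \sum_(r <- R) \sum_(s <- R) \sum_(r' <- R) \sum_(s' <- R)
   pure3 (r.2 * s.2 * b * (r'.2 * s'.2)) (S a2 * S s.1 * c1 * r'.1) (S a1 * S r.1 * c2 * s'.1).

Lemma Dr_nu_expand h : pi3 (Dr D (nu S D R h)) =
  \sum_(x <- D3 D h) \sum_(a <- D x.1.1) \sum_(c <- D x.2) Dr_nu_summand a.1 a.2 x.1.2 c.1 c.2.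
Proof.
have unfold_nu : pi3 (Dr D (nu S D R h)) =
  \sum_(r <- R) \sum_(x <- D3 D h) \sum_(r' <- R)
     \sum_(w <- D (S x.1.1 * S r.1 * x.2 * r'.1)) pure3 (r.2 * x.1.2 * r'.2) w.1 w.2.
  by rewrite pi3_Dr /nu big_flatten big_map; apply: eq_bigr => r _; rewrite big_allpairs_dep.
have Delta_leg2 A r x r' : \sum_(w <- D (S x.1.1 * S r.1 * x.2 * r'.1)) pure3 A w.1 w.2 =
  \sum_(a <- D x.1.1) \sum_(c <- D x.2) \sum_(b <- D r.1) \sum_(d <- D r'.1)
     pure3 A (S a.2 * S b.2 * c.1 * d.1) (S a.1 * S b.1 * c.2 * d.2).
  rewrite !Delta_mul_sum; try by linear_tac.
  rewrite Delta_antipode_sum; last by linear_tac.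
  apply: eq_bigr => a _ /=; rewrite Delta_antipode_sum /=; last by linear_tac.
  by rewrite exchange_big.
rewrite unfold_nu.
under eq_bigr => r _ do under eq_bigr => x _ do under eq_bigr => r' _ do rewrite Delta_leg2.
rewrite exchange_big; apply: eq_bigr => x _.
under eq_bigr => r _ do rewrite exchange_big.
rewrite exchange_big; apply: eq_bigr => a _.
under eq_bigr => r _ do rewrite exchange_big.
rewrite exchange_big; apply: eq_bigr => c _.
under eq_bigr => r _ do rewrite exchange_big.
rewrite (R_Delta_l_sum (G := fun t => \sum_(i <- R) \sum_(d <- D i.1) pure3 (t.2 * x.1.2 * i.2)
   (S a.2 * S t.1.2 * c.1 * d.1) (S a.1 * S t.1.1 * c.2 * d.2))) /=; last by linear_tac.
apply: eq_bigr => r _; apply: eq_bigr => s _.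
by rewrite (R_Delta_l_sum (G := fun t => pure3 (r.2 * s.2 * x.1.2 * t.2)
   (S a.2 * S s.1 * c.1 * t.1.1) (S a.1 * S r.1 * c.2 * t.1.2))) //; linear_tac.
Qed.

Lemma Dr_nu h : pi3 (Dr D (nu S D R h)) =
  \sum_(p <- D h) \sum_(q <- D p.1) \sum_(r <- R) \sum_(s' <- R)
    \sum_(x <- nu S D R q.2) pure3 (r.2 * x.1 * s'.2) x.2 (S q.1 * S r.1 * p.2 * s'.1).
Proof.
rewrite Dr_nu_expand /D3 /Dl big_flatten big_map.
under eq_bigr => p _ do rewrite big_map /=.
rewrite coassoc5_sum; last by rewrite /Dr_nu_summand; split=> *; linear_tac.
apply: eq_bigr => p _; apply: eq_bigr => q _.
under [in RHS]eq_bigr => r _ do under eq_bigr => s' _ do rewrite nu_sum.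
rewrite /Dr_nu_summand; symmetry.
transitivity (\sum_(r <- R) \sum_(s <- R) \sum_(u <- D q.2) \sum_(v <- D u.1) \sum_(r' <- R)
  \sum_(s' <- R) pure3 (r.2 * (s.2 * v.2 * r'.2) * s'.2) (S v.1 * S s.1 * u.2 * r'.1)
                       (S q.1 * S r.1 * p.2 * s'.1)).
  apply: eq_bigr => r _; rewrite exchange_big; apply: eq_bigr => s _.
  rewrite exchange_big; apply: eq_bigr => u _.
  rewrite exchange_big; apply: eq_bigr => v _.
  by rewrite exchange_big.
under eq_bigr => r _ do rewrite exchange_big.
under eq_bigr => r _ do under eq_bigr => u _ do rewrite exchange_big.
rewrite exchange_big; apply: eq_bigr => u _; rewrite exchange_big; apply: eq_bigr => v _.
do 4 (apply: eq_bigr => ? _); by rewrite !mulrA.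
Qed.

Lemma Dr_nu_mid_central h : in_mid (@central k H) (pi3 (Dr D (nu S D R h))).
Proof.
rewrite Dr_nu; do 4 (apply: in_mid_sum => ? _).
by apply: (in_mid_tensor2_r (f := fun a => _ * a * _)) (nu_central _); linear_tac.
Qed.

End Hopf.

Theorem lemma2p2 (k : fieldType) (H : algType k)
  (D : H -> seq (H * H)) (eps : H -> k) (S : H -> H) (R : seq (H * H)) :
  is_semiqt D eps S R ->
  forall h : H, in_tensor3_mid (central (H:=H)) (Dr D (nu S D R h)).
Proof.
move=> sqt h.
exact: in_tensor3_mid_pi3 (Dr_nu_mid_central (sqt_hopf sqt) (sqt1 sqt) (sqt5 sqt) h).
Qed.
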